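(* Let $M$ be a weight sequence of moderate growth such that $\liminf_{k\to\infty}m_k^{1/k}>0$ and $\liminf_{k\to\infty}\mu_{Qk}/\mu_k>1$ for some $Q\in\mathbb{N}_{\ge2}$. Then $\mathcal{B}^{\{M\}}(\mathbb{R}^n)=\mathcal{B}^{\{\omega_M\}}(\mathbb{R}^n)$ and $\mathcal{B}^{\{M\}}(E)=\mathcal{B}^{\{\omega_M\}}(E)$ for every compact $E\subseteq\mathbb{R}^n$.
   Context: A weight sequence is given by an increasing sequence $1=\mu_0\le\mu_1\le\cdots$ via $M_k=\mu_0\cdots\mu_k=k!\,m_k$, with $M_k^{1/k}\to\infty$; it has moderate growth if $M_{j+k}\le C^{j+k}M_jM_k$ for some $C$ and all $j,k$. $\omega_M(t)=\sup_k\log(t^k/M_k)$; under the hypotheses $\omega_M$ is a weight function (continuous increasing, $\omega(0)=0$, $\omega\to\infty$, $\omega(2t)=O(\omega(t))$, $\omega(t)=O(t)$, $\log t=o(\omega(t))$, $\omega(e^t)$ convex). For a weight function $\omega$ (normalized $\omega|_{[0,1]}=0$), $\varphi^*(t)=\sup_{s\ge0}(st-\omega(e^s))$ and $W^x_k=\exp(\frac1x\varphi^*(xk))$. $\mathcal{B}^{\{M\}}(\mathbb{R}^n)$: smooth $f$ with $\sup_{x,\alpha}|\partial^\alpha f(x)|/(\rho^{|\alpha|}M_{|\alpha|})<\infty$ for some $\rho>0$. $\mathcal{B}^{\{\omega\}}(\mathbb{R}^n)$: smooth $f$ with $\sup_{x,\alpha}|\partial^\alpha f(x)|\exp(-\frac1\rho\varphi^*(\rho|\alpha|))<\infty$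 for some $\rho\in\mathbb{N}$. For compact $E$, $\mathcal{B}^{\{M\}}(E)$ consists of jets $F=(F^\alpha)$, $F^\alpha\in C^0(E)$, with $C,\rho>0$ such that $|F^\alpha(a)|\le C\rho^{|\alpha|}M_{|\alpha|}$ and $|(R^p_aF)^\alpha(b)|\le C\rho^{p+1}M_{p+1}\frac{|b-a|^{p+1-|\alpha|}}{(p+1-|\alpha|)!}$ for all $\alpha$, $p\ge|\alpha|$, $a,b\in E$, where $(R^p_aF)^\alpha(b)=F^\alpha(b)-\sum_{|\beta|\le p-|\alpha|}\frac{(b-a)^\beta}{\beta!}F^{\alpha+\beta}(a)$; and $\mathcal{B}^{\{\omega\}}(E)=\bigcup_{x>0}\mathcal{B}^{\{W^x\}}(E)$. *)

From Stdlib Require Import Reals ClassicalEpsilon.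
From mathcomp Require Import all_boot.
Set Implicit Arguments. Unset Strict Implicit. Unset Printing Implicit Defensive.
Open Scope R_scope.

(* ---------- generic supremum (0 if the set is empty or unbounded above) ---- *)
Definition Rsup (E : R -> Prop) : R :=
  match excluded_middle_informative (bound E /\ exists x, E x) with
  | left H => proj1_sig (completeness E (proj1 H) (proj2 H))
  | right _ => 0
  end.

Fixpoint Mseq (mu : nat -> R) (k : nat) : R :=
  match k with
  | O => mu O
  | S k' => Mseq mu k' * mu (S k')
  end.

Definition mseq (mu : nat -> R) (k : nat) : R := Mseq mu k / INR (k`!).

Definition weight_sequence (mu : nat -> R) : Prop :=
  mu O = 1 /\ (forall k, mu k <= mu (S k)) /\
  (forall B : R, exists N : nat, forall k : nat, (N < k)%nat ->
      B <= Rpower (Mseq mu k) (/ INR k)).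

Definition moderate_growth (mu : nat -> R) : Prop :=
  exists C : R, forall j k : nat,
    Mseq mu (j + k) <= C ^ (j + k) * Mseq mu j * Mseq mu k.

Definition omegaM (M : nat -> R) (t : R) : R :=
  Rsup (fun y => exists k : nat, y = ln (t ^ k / M k)).

Definition phistar (omega : R -> R) (t : R) : R :=
  Rsup (fun y => exists s : R, 0 <= s /\ y = s * t - omega (exp s)).

Definition Wseq (omega : R -> R) (x : R) (k : nat) : R :=
  exp (/ x * phistar omega (x * INR k)).

Definition pt (n : nat) := 'I_n -> R.
Definition mindex (n : nat) := {ffun 'I_n -> nat}.

Definition mzero (n : nat) : mindex n := [ffun _ => 0%N].
Definition mincr (n : nat) (a : mindex n) (i : 'I_n) : mindex n :=
  [ffun j => if j == i then (a j).+1 else a j].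
Definition madd (n : nat) (a b : mindex n) : mindex n := [ffun j => (a j + b j)%N].
Definition mabs (n : nat) (a : mindex n) : nat := (\sum_(i < n) a i)%N.
Definition mfact (n : nat) (a : mindex n) : nat := (\prod_(i < n) (a i)`!)%N.
Definition mpow (n : nat) (x : pt n) (a : mindex n) : R :=
  \big[Rmult/1]_(i < n) (x i ^ a i).

Definition shift (n : nat) (x : pt n) (i : 'I_n) (t : R) : pt n :=
  fun j => if j == i then x j + t else x j.

Definition vsub (n : nat) (b a : pt n) : pt n := fun i => b i - a i.
Definition norm (n : nat) (x : pt n) : R := sqrt (\big[Rplus/0]_(i < n) (x i ^ 2)).

Definition continuous_Rn (n : nat) (g : pt n -> R) : Prop :=
  forall x eps, 0 < eps -> exists delta, 0 < delta /\
    forall y, norm (vsub y x) < delta -> Rabs (g y - g x) < eps.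

(* D is the family of all partial derivatives of f: D alpha = d^alpha f,
   all continuous (so f is C^infinity). *)
Definition smooth_family (n : nat) (f : pt n -> R) (D : mindex n -> pt n -> R) : Prop :=
  (forall x, D (mzero n) x = f x) /\
  (forall a i x, derivable_pt_lim (fun t => D a (shift x i t)) 0 (D (mincr a i) x)) /\
  (forall a, continuous_Rn (D a)).

Definition B_M_Rn (M : nat -> R) (n : nat) (f : pt n -> R) : Prop :=
  exists D, smooth_family f D /\
  exists rho : R, 0 < rho /\ exists C : R, forall x a,
    Rabs (D a x) / (rho ^ mabs a * M (mabs a)) <= C.

Definition B_omega_Rn (omega : R -> R) (n : nat) (f : pt n -> R) : Prop :=
  exists D, smooth_family f D /\
  exists rho : nat, (1 <= rho)%N /\ exists C : R, forall x a,
    Rabs (D a x) * exp (- (/ INR rho * phistar omega (INR rho * INR (mabs a)))) <= C.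

Definition open_Rn (n : nat) (U : pt n -> Prop) : Prop :=
  forall x, U x -> exists eps, 0 < eps /\ forall y, norm (vsub y x) < eps -> U y.

Definition compact_Rn (n : nat) (E : pt n -> Prop) : Prop :=
  forall (I : Type) (U : I -> pt n -> Prop),
    (forall i, open_Rn (U i)) ->
    (forall x, E x -> exists i, U i x) ->
    exists l : list I, forall x, E x -> exists i, List.In i l /\ U i x.

Definition jet (n : nat) := mindex n -> pt n -> R.

Definition continuous_on (n : nat) (E : pt n -> Prop) (g : pt n -> R) : Prop :=
  forall a eps, E a -> 0 < eps -> exists delta, 0 < delta /\
    forall b, E b -> norm (vsub b a) < delta -> Rabs (g b - g a) < eps.

Definition mof (n d : nat) (b : {ffun 'I_n -> 'I_d.+1}) : mindex n :=
  [ffun i => nat_of_ord (b i)].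

Definition remainder (n : nat) (F : jet n) (p : nat) (a : pt n) (al : mindex n)
    (b : pt n) : R :=
  let d := (p - mabs al)%N in
  F al b -
  \big[Rplus/0]_(be : {ffun 'I_n -> 'I_d.+1} | (mabs (mof be) <= d)%N)
     (mpow (vsub b a) (mof be) / INR (mfact (mof be)) * F (madd al (mof be)) a).

Definition B_jet (N : nat -> R) (n : nat) (E : pt n -> Prop) (F : jet n) : Prop :=
  (forall al, continuous_on E (F al)) /\
  exists C rho : R, 0 < C /\ 0 < rho /\
  (forall al a, E a -> Rabs (F al a) <= C * rho ^ mabs al * N (mabs al)) /\
  (forall al (p : nat) a b, (mabs al <= p)%N -> E a -> E b ->
     Rabs (remainder F p a al b) <=
       C * rho ^ (p + 1) * N (p + 1)%N *
       (norm (vsub b a) ^ (p + 1 - mabs al) / INR ((p + 1 - mabs al)`!))).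

Definition B_omega_jet (omega : R -> R) (n : nat) (E : pt n -> Prop) (F : jet n) : Prop :=
  exists x : R, 0 < x /\ B_jet (Wseq omega x) E F.

(* With logM k = ln M_k we have omega_M(e^s) = sup_k (k s - logM k), and phi^*
   is its Legendre transform.  Log-convexity of M gives phi^*(k) >= logM k, hence
   M_k <= W^1_k; and for 0 < x <= r, phi^*(x k)/x <= logM(r k)/r, which moderate
   growth bounds by r k ln A + logM k, hence W^x_k <= (A^r)^k M_k.  These two
   comparisons up to geometric factors identify the jet classes.  On R^n the
   omega-class has no free geometric factor rho^k, only the integer parameter P of
   W^P; the condition liminf mu_{Qk}/mu_k > 1 makes logM(P k)/P exceed
   logM k + k ln rho up to a constant for P large enough, which absorbs any rho. *)

From Stdlib Require Import Reals Lra Lia ClassicalEpsilon.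
From Coquelicot Require Import Rcomplements.
From mathcomp Require ssrbool ssrnat.
Open Scope R_scope.

Lemma exp_le x y : x <= y -> exp x <= exp y.
Proof.
intros [Hlt | <-]; [now left; apply exp_increasing | apply Rle_refl].
Qed.

Lemma Rsup_ub (E : R -> Prop) x : bound E -> E x -> x <= Rsup E.
Proof.
intros Hb Hx; unfold Rsup.
destruct excluded_middle_informative as [H | H].
- destruct (completeness E (proj1 H) (proj2 H)) as [m [Hm Hlub]]; simpl; now apply Hm.
- exfalso; apply H; split; eauto.
Qed.

Lemma Rsup_le (E : R -> Prop) b :
  (exists x, E x) -> (forall x, E x -> x <= b) -> Rsup E <= b.
Proof.
intros Hne Hb; unfold Rsup.
destruct excluded_middle_informative as [H | H].
- destruct (completeness E (proj1 H) (proj2 H)) as [m [Hub Hm]]; simpl; now apply Hm.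
- exfalso; apply H; split; [now exists b | exact Hne].
Qed.

Lemma Rdiv_le_of_le_scale d a b e C : 0 < a -> 0 < b -> 0 <= d ->
  a <= e * b -> d / a <= C -> d / b <= e * C.
Proof.
intros Ha Hb Hd Hab HC.
assert (Hba : a / b <= e).
{ apply Rmult_le_reg_r with b; [exact Hb |].
  unfold Rdiv; rewrite Rmult_assoc, Rinv_l; lra. }
replace (d / b) with (d / a * (a / b)) by (field; lra).
rewrite Rmult_comm; apply Rmult_le_compat; [| | exact Hba | exact HC].
- apply Rdiv_le_0_compat; lra.
- apply Rdiv_le_0_compat; lra.
Qed.

Lemma B_jet_scale (N N' : nat -> R) h n (E : pt n -> Prop) (F : jet n) :
  0 < h -> (forall k, N k <= h ^ k * N' k) -> B_jet N E F -> B_jet N' E F.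
Proof.
intros Hh HN [Hcont [C [rho [HC [Hrho [Hval Hrem]]]]]].
assert (Hscale : forall j, C * rho ^ j * N j <= C * (rho * h) ^ j * N' j).
{ intros j; rewrite Rpow_mult_distr, !Rmult_assoc.
  apply Rmult_le_compat_l; [lra |]; apply Rmult_le_compat_l; [apply pow_le; lra |].
  apply HN. }
split; [exact Hcont |]; exists C, (rho * h); do 2 (split; [nra |]); split.
- intros al a Ea; eapply Rle_trans; [apply Hval, Ea | apply Hscale].
- intros al p a b Hp Ea Eb; eapply Rle_trans; [apply Hrem; assumption |].
  apply Rmult_le_compat_r; [| apply Hscale].
  apply Rmult_le_pos; [apply pow_le, sqrt_pos |].
  left; apply Rinv_0_lt_compat, lt_0_INR, (ssrbool.elimT ssrnat.ltP), ssrnat.fact_gt0.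
Qed.

Section WeightSequence.

Variable mu : nat -> R.
Hypothesis mu0 : mu O = 1.
Hypothesis mu_incr : forall k, mu k <= mu (S k).

Definition logM (k : nat) : R := ln (Mseq mu k).

Lemma mu_le i j : (i <= j)%nat -> mu i <= mu j.
Proof. induction 1; [apply Rle_refl | eapply Rle_trans; eauto]. Qed.

Lemma mu_ge1 k : 1 <= mu k.
Proof. rewrite <- mu0; apply mu_le; lia. Qed.

Lemma Mseq_ge1 k : 1 <= Mseq mu k.
Proof. induction k; simpl; [lra | pose proof (mu_ge1 (S k)); nra]. Qed.

Lemma Mseq_pos k : 0 < Mseq mu k.
Proof. pose proof (Mseq_ge1 k); lra. Qed.

Lemma ln_mu_le i j : (i <= j)%nat -> ln (mu i) <= ln (mu j).
Proof. intros Hij; pose proof (mu_ge1 i); apply ln_le; [lra | now apply mu_le]. Qed.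

Lemma ln_mu_ge0 k : 0 <= ln (mu k).
Proof. rewrite <- ln_1, <- mu0; apply ln_mu_le; lia. Qed.

Lemma logM_0 : logM 0 = 0.
Proof. unfold logM; simpl; rewrite mu0; apply ln_1. Qed.

Lemma logM_S k : logM (S k) = logM k + ln (mu (S k)).
Proof.
unfold logM; simpl; apply ln_mult; [apply Mseq_pos | pose proof (mu_ge1 (S k)); lra].
Qed.

Lemma logM_shift_ge K d : INR d * ln (mu K) <= logM (K + d) - logM K.
Proof.
induction d as [| d IH]; [rewrite Nat.add_0_r; simpl; lra |].
rewrite Nat.add_succ_r, logM_S, S_INR.
pose proof (ln_mu_le K (S (K + d)) ltac:(lia)); lra.
Qed.

Lemma logM_shift_le K d : logM (K + d) - logM K <= INR d * ln (mu (K + d)).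
Proof.
induction d as [| d IH]; [rewrite Nat.add_0_r; simpl; lra |].
rewrite Nat.add_succ_r, logM_S, S_INR.
pose proof (ln_mu_le (K + d) (S (K + d)) ltac:(lia)); pose proof (pos_INR d); nra.
Qed.

Lemma logM_le i j : (i <= j)%nat -> logM i <= logM j.
Proof.
intros Hij; replace j with (i + (j - i))%nat by lia.
pose proof (logM_shift_ge i (j - i)); pose proof (pos_INR (j - i)).
pose proof (ln_mu_ge0 i); nra.
Qed.

Lemma logM_ge0 k : 0 <= logM k.
Proof. rewrite <- logM_0; apply logM_le; lia. Qed.

Hypothesis logM_superlinear :
  forall s, exists N, forall k, (N < k)%nat -> INR k * s <= logM k.

Lemma ln_exp_pow_div s k : ln (exp s ^ k / Mseq mu k) = INR k * s - logM k.
Proof.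
unfold Rdiv, logM; pose proof (Mseq_pos k).
rewrite ln_mult, ln_Rinv, ln_pow, ln_exp; try lra.
- apply exp_pos.
- apply pow_lt, exp_pos.
- now apply Rinv_0_lt_compat.
Qed.

Lemma omegaM_bound s :
  bound (fun y => exists k : nat, y = ln (exp s ^ k / Mseq mu k)).
Proof.
destruct (logM_superlinear s) as [N HN].
exists (INR N * Rabs s); intros y [k ->]; rewrite ln_exp_pow_div.
pose proof (logM_ge0 k); pose proof (Rle_abs s); pose proof (Rabs_pos s).
pose proof (pos_INR N); pose proof (pos_INR k).
destruct (Nat.le_gt_cases k N) as [Hk | Hk].
- pose proof (le_INR _ _ Hk); nra.
- specialize (HN k Hk); nra.
Qed.

Lemma omegaM_exp_ge s k : INR k * s - logM k <= omegaM (Mseq mu) (exp s).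
Proof.
apply Rsup_ub; [apply omegaM_bound |].
exists k; now rewrite ln_exp_pow_div.
Qed.

Lemma omegaM_exp_le s b :
  (forall k, INR k * s - logM k <= b) -> omegaM (Mseq mu) (exp s) <= b.
Proof.
intros Hb; apply Rsup_le; [now exists (ln (exp s ^ 0 / Mseq mu 0)), 0%nat |].
intros y [k ->]; rewrite ln_exp_pow_div; apply Hb.
Qed.

Lemma omegaM_exp_ge0 s : 0 <= omegaM (Mseq mu) (exp s).
Proof. pose proof (omegaM_exp_ge s 0); rewrite logM_0 in H; simpl in H; lra. Qed.

Lemma phistar_bound t : 0 <= t ->
  bound (fun y => exists s, 0 <= s /\ y = s * t - omegaM (Mseq mu) (exp s)).
Proof.
intros Ht; destruct (INR_unbounded t) as [J HJ].
exists (logM J); intros y [s [Hs ->]].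
pose proof (omegaM_exp_ge s J); nra.
Qed.

Lemma phistar_ge t s : 0 <= t -> 0 <= s ->
  s * t - omegaM (Mseq mu) (exp s) <= phistar (omegaM (Mseq mu)) t.
Proof. intros Ht Hs; apply Rsup_ub; [now apply phistar_bound | now exists s]. Qed.

Lemma phistar_le t b :
  (forall s, 0 <= s -> s * t - omegaM (Mseq mu) (exp s) <= b) ->
  phistar (omegaM (Mseq mu)) t <= b.
Proof.
intros Hb; apply Rsup_le; [exists (0 * t - omegaM (Mseq mu) (exp 0)), 0; split; [lra | reflexivity] |].
intros y [s [Hs ->]]; auto.
Qed.

(* At s = ln mu_K the supremum defining omega_M(e^s) is attained at k = K. *)
Lemma logM_le_phistar K : logM K <= phistar (omegaM (Mseq mu)) (INR K).
Proof.
set (s := ln (mu K)).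
assert (Hom : omegaM (Mseq mu) (exp s) <= INR K * s - logM K).
{ apply omegaM_exp_le; intros j.
  destruct (Nat.le_gt_cases j K) as [Hj | Hj].
  - pose proof (logM_shift_le j (K - j)) as Hshift.
    replace (j + (K - j))%nat with K in Hshift by lia.
    rewrite minus_INR in Hshift by lia; unfold s; lra.
  - pose proof (logM_shift_ge K (j - K)) as Hshift.
    replace (K + (j - K))%nat with j in Hshift by lia.
    rewrite minus_INR in Hshift by lia; unfold s; lra. }
pose proof (phistar_ge (INR K) s (pos_INR K) (ln_mu_ge0 K)); lra.
Qed.

Lemma phistar_le_logM x r k : 0 < x -> x <= INR r ->
  phistar (omegaM (Mseq mu)) (x * INR k) <= x / INR r * logM (r * k).
Proof.
intros Hx Hxr; apply phistar_le; intros s Hs.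
pose proof (omegaM_exp_ge0 s) as Hw0.
pose proof (omegaM_exp_ge s (r * k)) as Hw; rewrite mult_INR in Hw.
set (a := x / INR r) in *; set (w := omegaM (Mseq mu) (exp s)) in *.
assert (Hxa : x = a * INR r) by (unfold a; field; lra).
assert (Ha : 0 < a <= 1) by (rewrite Hxa in Hx, Hxr; split; nra).
rewrite Hxa; nra.
Qed.

Lemma Mseq_le_Wseq1 k : Mseq mu k <= Wseq (omegaM (Mseq mu)) 1 k.
Proof.
unfold Wseq; rewrite Rinv_1, !Rmult_1_l, <- (exp_ln (Mseq mu k)) by apply Mseq_pos.
apply exp_le, logM_le_phistar.
Qed.

Lemma logM_dilate_ge P h k0 : (1 <= P)%nat ->
  (forall k, (k0 <= k)%nat -> ln (mu (S k)) + h <= ln (mu (P * k))) ->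
  exists K, forall k, INR P * (logM k + INR k * h - K) <= logM (P * k).
Proof.
intros HP Hgain.
set (f k := logM (P * k) - INR P * (logM k + INR k * h)).
assert (Hstep : forall k, (k0 <= k)%nat -> f k <= f (S k)).
{ intros k Hk; unfold f.
  pose proof (logM_shift_ge (P * k) P) as Hshift.
  replace (P * k + P)%nat with (P * S k)%nat in Hshift by lia.
  rewrite logM_S, S_INR.
  pose proof (Hgain k Hk); pose proof (pos_INR P); nra. }
assert (Hmono : forall d, f k0 <= f (k0 + d)%nat).
{ induction d as [| d IH]; [rewrite Nat.add_0_r; lra |].
  rewrite Nat.add_succ_r; pose proof (Hstep (k0 + d)%nat ltac:(lia)); lra. }
exists (logM k0 + Rabs h * INR k0 + Rabs (f k0)); intros k.
assert (HP1 : 1 <= INR P) by (apply (le_INR 1); exact HP).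
assert (Hh : 0 <= Rabs h) by apply Rabs_pos.
assert (HL : 0 <= logM k0 + Rabs h * INR k0)
  by (pose proof (logM_ge0 k0); pose proof (pos_INR k0); nra).
assert (Hf : - f k0 <= INR P * Rabs (f k0)).
{ pose proof (Rle_abs (- f k0)); rewrite Rabs_Ropp in *.
  pose proof (Rabs_pos (f k0)); nra. }
destruct (Nat.le_gt_cases k0 k) as [Hk | Hk].
- assert (Hfk : f k0 <= f k)
    by (replace k with (k0 + (k - k0))%nat by lia; apply Hmono).
  unfold f at 2 in Hfk; nra.
- pose proof (logM_le k k0 ltac:(lia)); pose proof (logM_ge0 (P * k)).
  pose proof (le_INR k k0 ltac:(lia)); pose proof (pos_INR k); pose proof (Rle_abs h).
  assert (INR k * h <= Rabs h * INR k0) by nra.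
  pose proof (Rabs_pos (f k0)); nra.
Qed.

Section ModerateGrowth.

Variable A : R.
Hypothesis Mseq_add_le :
  forall j k, Mseq mu (j + k) <= A ^ (j + k) * Mseq mu j * Mseq mu k.

Lemma moderate_growth_ge1 : 1 <= A.
Proof.
pose proof (Mseq_add_le 1 0) as H10; simpl in H10; rewrite mu0 in H10.
pose proof (mu_ge1 1); nra.
Qed.

Lemma logM_add_le j k : logM (j + k) <= INR (j + k) * ln A + logM j + logM k.
Proof.
pose proof moderate_growth_ge1; pose proof (Mseq_pos j); pose proof (Mseq_pos k).
unfold logM; rewrite <- ln_pow, <- !ln_mult by (try apply Rmult_lt_0_compat;
  try apply pow_lt; lra).
apply ln_le; [apply Mseq_pos | apply Mseq_add_le].
Qed.

Lemma logM_mul_le r k :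
  logM (r * k) <= INR r * INR r * INR k * ln A + INR r * logM k.
Proof.
assert (HA : 0 <= ln A) by (rewrite <- ln_1; apply ln_le; [lra | apply moderate_growth_ge1]).
induction r as [| r IH]; [simpl; rewrite logM_0; lra |].
pose proof (logM_add_le (r * k) k) as Hadd; rewrite plus_INR, mult_INR in Hadd.
simpl Nat.mul; rewrite Nat.add_comm, S_INR.
pose proof (pos_INR r); pose proof (pos_INR k); pose proof (logM_ge0 k).
assert (0 <= INR r * INR k * ln A) by (apply Rmult_le_pos; [apply Rmult_le_pos |]; lra).
nra.
Qed.

Lemma Wseq_le_Mseq x r k : 0 < x -> x <= INR r ->
  Wseq (omegaM (Mseq mu)) x k <= (A ^ r) ^ k * Mseq mu k.
Proof.
intros Hx Hxr.
pose proof moderate_growth_ge1.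
rewrite <- pow_mult, <- (exp_ln (A ^ _)), <- (exp_ln (Mseq mu k)), <- exp_plus
  by (try apply pow_lt; try apply Mseq_pos; lra).
unfold Wseq; apply exp_le; rewrite ln_pow, mult_INR by lra; fold (logM k).
pose proof (phistar_le_logM x r k Hx Hxr) as Hphi.
pose proof (logM_mul_le r k) as Hmul.
apply Rmult_le_compat_l with (r := / x) in Hphi; [| left; now apply Rinv_0_lt_compat].
replace (/ x * (x / INR r * logM (r * k))) with (logM (r * k) / INR r) in Hphi
  by (field; lra).
apply (Rle_trans _ _ _ Hphi), Rmult_le_reg_r with (INR r); [lra |].
unfold Rdiv; rewrite Rmult_assoc, Rinv_l by lra; nra.
Qed.

Lemma B_jet_M_iff_omega n (E : pt n -> Prop) (F : jet n) :
  B_jet (Mseq mu) E F <-> B_omega_jet (omegaM (Mseq mu)) E F.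
Proof.
split.
- intros HF; exists 1; split; [lra |].
  apply (B_jet_scale (Mseq mu) _ 1); [lra | | exact HF].
  intros k; rewrite pow1, Rmult_1_l; apply Mseq_le_Wseq1.
- intros [x [Hx HF]]; destruct (INR_unbounded x) as [r Hr].
  apply (B_jet_scale _ (Mseq mu) (A ^ r)) in HF; [exact HF | |].
  + apply pow_lt; pose proof moderate_growth_ge1; lra.
  + intros k; apply Wseq_le_Mseq; lra.
Qed.

Section DilationGain.

Variables (Q N : nat) (c : R).
Hypothesis Q_ge2 : (2 <= Q)%nat.
Hypothesis c_gt1 : 1 < c.
Hypothesis mu_ratio_ge : forall k, (N < k)%nat -> c <= mu (Q * k) / mu k.

Lemma ln_mu_dilate_iter m j :
  (N < j)%nat -> ln (mu j) + INR m * ln c <= ln (mu (Q ^ m * j)).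
Proof.
intros Hj; induction m as [| m IH]; [simpl; rewrite Nat.add_0_r; lra |].
pose proof (Nat.pow_nonzero Q m ltac:(lia)) as Hpow.
assert (Hratio : c * mu (Q ^ m * j)%nat <= mu (Q * (Q ^ m * j))%nat).
{ pose proof (mu_ge1 (Q ^ m * j)); pose proof (mu_ratio_ge (Q ^ m * j) ltac:(nia)).
  apply Rmult_le_reg_r with (/ mu (Q ^ m * j)%nat); [apply Rinv_0_lt_compat; lra |].
  rewrite Rmult_assoc, Rinv_r by lra; lra. }
apply ln_le in Hratio; [| pose proof (mu_ge1 (Q ^ m * j)); nra].
rewrite ln_mult in Hratio by (try pose proof (mu_ge1 (Q ^ m * j)); lra).
rewrite Nat.pow_succ_r', <- Nat.mul_assoc, S_INR; lra.
Qed.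

(* With q = Q^(m+1) >= 2, dilating by P = q^2 gains (m+1) ln c >= h in ln mu,
   since P k >= q (k + 1) once k >= 1. *)
Lemma ln_mu_gain h : exists P k0, (1 <= P)%nat /\
  forall k, (k0 <= k)%nat -> ln (mu (S k)) + h <= ln (mu (P * k)).
Proof.
assert (Hc : 0 < ln c) by (rewrite <- ln_1; apply ln_increasing; lra).
destruct (INR_unbounded (h / ln c)) as [m Hm].
assert (Hmc : h <= INR m * ln c).
{ apply Rmult_le_reg_r with (/ ln c); [now apply Rinv_0_lt_compat |].
  rewrite Rmult_assoc, Rinv_r by lra; unfold Rdiv in Hm; lra. }
pose proof (Nat.pow_gt_1 Q (S m) ltac:(lia) ltac:(lia)) as Hpow.
exists (Q ^ S m * Q ^ S m)%nat, (Nat.max N 1); split; [nia |].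
intros k Hk.
pose proof (ln_mu_dilate_iter (S m) (S k) ltac:(lia)) as Hiter.
pose proof (ln_mu_le (Q ^ S m * S k) (Q ^ S m * Q ^ S m * k) ltac:(nia)).
rewrite S_INR in Hiter; lra.
Qed.

Lemma Mseq_le_Wseq rho : 0 < rho -> exists P K, (1 <= P)%nat /\
  forall k, rho ^ k * Mseq mu k <= exp K * Wseq (omegaM (Mseq mu)) (INR P) k.
Proof.
intros Hrho; destruct (ln_mu_gain (ln rho)) as [P [k0 [HP Hgain]]].
destruct (logM_dilate_ge _ _ _ HP Hgain) as [K HK].
exists P, K; split; [exact HP |]; intros k.
assert (HP0 : 0 < INR P) by (apply lt_0_INR; lia).
pose proof (logM_le_phistar (P * k)) as Hphi; rewrite mult_INR in Hphi.
unfold Wseq; rewrite <- (exp_ln (rho ^ k)), <- (exp_ln (Mseq mu k)), <- !exp_plus,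
  ln_pow by (try apply pow_lt; try apply Mseq_pos; lra).
apply exp_le; fold (logM k).
apply Rmult_le_reg_l with (INR P); [exact HP0 |].
set (phi := phistar _ _) in *.
replace (INR P * (K + / INR P * phi)) with (INR P * K + phi) by (field; lra).
specialize (HK k); lra.
Qed.

Lemma B_Rn_M_iff_omega n (f : pt n -> R) :
  B_M_Rn (Mseq mu) f <-> B_omega_Rn (omegaM (Mseq mu)) f.
Proof.
split.
- intros [D [HD [rho [Hrho [C HC]]]]].
  destruct (Mseq_le_Wseq rho Hrho) as [P [K [HP HPK]]].
  exists D; split; [exact HD |].
  exists P; split; [exact (ssrbool.introT ssrnat.leP HP) |].
  exists (exp K * C); intros x a; rewrite exp_Ropp.
  apply (Rdiv_le_of_le_scale _ (rho ^ mabs a * Mseq mu (mabs a))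
           (Wseq (omegaM (Mseq mu)) (INR P) (mabs a))).
  + apply Rmult_lt_0_compat; [apply pow_lt, Hrho | apply Mseq_pos].
  + apply exp_pos.
  + apply Rabs_pos.
  + apply HPK.
  + apply HC.
- intros [D [HD [rho [Hrho [C HC]]]]].
  pose proof (lt_0_INR rho (ssrbool.elimT ssrnat.leP Hrho)) as Hrho0.
  exists D; split; [exact HD |].
  exists (A ^ rho); split; [apply pow_lt; pose proof moderate_growth_ge1; lra |].
  exists C; intros x a; rewrite <- (Rmult_1_l C).
  apply (Rdiv_le_of_le_scale _ (Wseq (omegaM (Mseq mu)) (INR rho) (mabs a))).
  + apply exp_pos.
  + apply Rmult_lt_0_compat; [apply pow_lt, pow_lt | apply Mseq_pos];
      pose proof moderate_growth_ge1; lra.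
  + apply Rabs_pos.
  + rewrite Rmult_1_l; apply Wseq_le_Mseq; lra.
  + unfold Rdiv, Wseq; rewrite <- exp_Ropp; apply HC.
Qed.

End DilationGain.

End ModerateGrowth.

End WeightSequence.

Lemma weight_sequence_logM_superlinear mu : weight_sequence mu ->
  forall s, exists N, forall k, (N < k)%nat -> INR k * s <= logM mu k.
Proof.
intros [_ [_ Hroot]] s; destruct (Hroot (exp s)) as [N HN].
exists N; intros k Hk.
specialize (HN k (ssrbool.introT ssrnat.ltP Hk)); unfold Rpower in HN.
apply ln_le in HN; [| apply exp_pos]; rewrite !ln_exp in HN.
assert (Hk0 : 0 < INR k) by (apply lt_0_INR; lia).
apply Rmult_le_compat_l with (r := INR k) in HN; [| lra].
rewrite <- Rmult_assoc, Rinv_r, Rmult_1_l in HN by lra; exact HN.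
Qed.

From mathcomp Require Import all_boot.
Open Scope R_scope.

Theorem lemma5p8 (mu : nat -> R) :
  weight_sequence mu ->
  moderate_growth mu ->
  (exists c : R, 0 < c /\ exists N : nat, forall k : nat, (N < k)%nat ->
      c <= Rpower (mseq mu k) (/ INR k)) ->
  (exists Q : nat, (2 <= Q)%nat /\ exists c : R, 1 < c /\ exists N : nat,
      forall k : nat, (N < k)%nat -> c <= mu (Q * k)%nat / mu k) ->
  (forall (n : nat) (f : pt n -> R),
      B_M_Rn (Mseq mu) f <-> B_omega_Rn (omegaM (Mseq mu)) f) /\
  (forall (n : nat) (E : pt n -> Prop), compact_Rn E ->
      forall F : jet n, B_jet (Mseq mu) E F <-> B_omega_jet (omegaM (Mseq mu)) E F).
Proof.
move=> Hws [A HA] _ [Q [HQ [c [Hc [N HN]]]]].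
have [mu0 [mu_incr _]] := Hws.
have Hsup := weight_sequence_logM_superlinear _ Hws.
split=> [n f | n E _ F].
- apply: (B_Rn_M_iff_omega _ mu0 mu_incr Hsup _ HA Q N c _ Hc).
  + exact/leP.
  + by move=> k /ltP; apply: HN.
- exact: (B_jet_M_iff_omega _ mu0 mu_incr Hsup _ HA).
Qed.
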